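(* Let $G$ be a global neural network model and $W = G + U$ a local model obtained by applying an update $U$ (all viewed as parameter vectors of the same architecture, whose output layer has $P$ neurons). Then for every $\lambda \in \mathbb{R}\setminus\{0\}$, $$\mathrm{TE}(G, W) = \mathrm{TE}(G, G + \lambda U),$$ i.e., the number of Threshold Exceedings is unchanged when the update is scaled by $\lambda$.
   Context: Consider a neural network whose output layer has $P$ neurons, indexed $i=1,\dots,P$; each output neuron $i$ has a bias and $H+1$ incoming weights (connections to neurons $h=0,\dots,H$ of the previous layer). For a model $W$ write $b_{W,i}$ for the bias of output neuron $i$ and $w_{W,i,h}$ for its weight to neuron $h$ of the previous layer. For a global model $G$ and local model $W$ define the update energy of output neuron $i$ as $$\mathcal{E}_i(G,W) = |b_{W,i} - b_{G,i}| + \sum_{h=0}^{H} |w_{W,i,h} - w_{G,i,h}|,$$ the Normalized Energy Update (NEUP) as $\mathcal{C}_i(G,W) = \mathcal{E}_i(G,W)^2 / \sum_{j=1}^{P}\mathcal{E}_j(G,W)^2$, the maximal NEUP $\mathcal{C}_{\max}(G,W) = \max_{1\le i\le P}\mathcal{C}_i(G,W)$, the threshold $\xi(G,W) = \max(0.01, 1/P)\cdot \mathcal{C}_{\max}(G,W)$, and the number of Threshold Exceedings $$\mathrm{TE}(G,W) = \#\{\, i \in \{1,\dots,P\} : \mathcal{C}_i(G,W) > \xi(G,W)\,\}.$$ For a scalar $\lambda$, $G+\lambda U$ denotes the model whose parameters are those of $G$ plus $\lambda$ times the corresponding entries of the update $U$. *)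

From HB Require Import structures.
From mathcomp Require Import all_boot all_order all_algebra.
Set Implicit Arguments. Unset Strict Implicit. Unset Printing Implicit Defensive.
Import Order.TTheory GRing.Theory Num.Theory.
Local Open Scope ring_scope.

(* A model (parameter vector) of a fixed architecture: the output layer has
   P neurons, each with a bias and H+1 incoming weights (from neurons
   h = 0..H of the previous layer); all remaining parameters of the network
   are collected in a vector of K reals. *)
Record model (R : realFieldType) (P H K : nat) := Model {
  bias : 'I_P -> R;
  weight : 'I_P -> 'I_H.+1 -> R;
  rest : 'rV[R]_K
}.

Section Defs.
Variables (R : realFieldType) (P H K : nat).
Implicit Types (G W U : model R P H K).

Definition madd_scale G (lam : R) U : model R P H K :=
  Model (fun i => bias G i + lam * bias U i)
        (fun i h => weight G i h + lam * weight U i h)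
        (rest G + lam *: rest U).

Definition madd G U : model R P H K := madd_scale G 1 U.

Definition energy G W (i : 'I_P) : R :=
  `|bias W i - bias G i| + \sum_(h < H.+1) `|weight W i h - weight G i h|.

Definition neup G W (i : 'I_P) : R :=
  energy G W i ^+ 2 / \sum_(j < P) energy G W j ^+ 2.

Definition neup_max G W : R := \big[Num.max/0]_(i < P) neup G W i.

Definition threshold G W : R :=
  Num.max (1 / 100) (1 / P%:R) * neup_max G W.

Definition TE G W : nat := #|[set i : 'I_P | threshold G W < neup G W i]|.

End Defs.

(* Scaling the update by [lam] scales every update energy by [|lam|]; the NEUP
   divides a squared energy by the sum of all squared energies, so the common
   factor [lam^2] cancels. The threshold and the count TE only depend on the
   vector of NEUPs. *)

From mathcomp Require Import all_boot all_order all_algebra.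
Import Order.TTheory GRing.Theory Num.Theory.
Local Open Scope ring_scope.

Lemma normalized_sqrZ (R : fieldType) (I : finType) (c : R) (e : I -> R) (i : I) :
  c != 0 -> (c * e i) ^+ 2 / \sum_j (c * e j) ^+ 2 = e i ^+ 2 / \sum_j e j ^+ 2.
Proof.
move=> c_neq0; under eq_bigr => j _ do rewrite exprMn.
rewrite exprMn -big_distrr /= invfM mulrACA mulfV ?mul1r //.
exact: expf_neq0.
Qed.

Section Scaling.
Variables (R : realFieldType) (P H K : nat).
Implicit Types (G U W : model R P H K).

Lemma energy_madd_scale G U (lam : R) (i : 'I_P) :
  energy G (madd_scale G lam U) i = `|lam| * energy G (madd G U) i.
Proof.
rewrite /energy /madd /= mulrDr big_distrr /=.
congr (_ + _); first by rewrite !(addrC (bias G i)) !addrK mul1r normrM.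
by apply: eq_bigr => h _; rewrite !(addrC (weight G i h)) !addrK mul1r normrM.
Qed.

Lemma neup_madd_scale G U (lam : R) (i : 'I_P) :
  lam != 0 -> neup G (madd_scale G lam U) i = neup G (madd G U) i.
Proof.
move=> lam_neq0; rewrite /neup.
under eq_bigr => j _ do rewrite energy_madd_scale.
by rewrite energy_madd_scale normalized_sqrZ ?normr_eq0.
Qed.

Lemma eq_TE G W (W' : model R P H K) : neup G W =1 neup G W' -> TE G W = TE G W'.
Proof.
move=> eq_neup; have eq_thr : threshold G W = threshold G W'.
  by rewrite /threshold /neup_max; under eq_bigr => i _ do rewrite eq_neup.
by apply: eq_card => i; rewrite !inE eq_thr eq_neup.
Qed.

End Scaling.

Theorem theorem2 (R : realFieldType) (P H K : nat) (G U : model R P H K) (lam : R) :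
  lam != 0 ->
  TE G (madd G U) = TE G (madd_scale G lam U).
Proof.
by move=> lam_neq0; apply: eq_TE => i; rewrite neup_madd_scale.
Qed.
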